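(* For every integer $m\ge2$ and every graph $G$, $\hom(S_{2,1^{m-2}};G)^{m}\ge \hom(S_{2,1^{m-1}};G)^{m-1}$. (For $m=2$ this is the path inequality $\hom(P_2;G)^2\ge\hom(P_3;G)$, where $P_\ell$ is the path with $\ell$ edges.)
   Context: All graphs are finite; $\hom(H;G)$ is the number of graph homomorphisms from $H$ to $G$. For $k\ge0$, $S_{2,1^k}$ is the tree with vertex set $\{1,\ldots,k+3\}$ and edge set $\{\{1,j\}:2\le j\le k+2\}\cup\{\{k+2,k+3\}\}$; note $S_{2,1^0}=P_2$ and $S_{2,1^1}=P_3$. *)

From mathcomp Require Import all_boot.
Set Implicit Arguments. Unset Strict Implicit. Unset Printing Implicit Defensive.

Definition simple_graph (V : finType) (e : rel V) : Prop :=
  symmetric e /\ irreflexive e.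

Definition hom (H G : finType) (eH : rel H) (eG : rel G) : nat :=
  #|[set f : {ffun H -> G} | [forall x, forall y, eH x y ==> eG (f x) (f y)]]|.

(* S_{2,1^k}: vertices {1,...,k+3} encoded as 'I_(k+3) (vertex v is ordinal
   v-1); edges {1,j} for 2<=j<=k+2 and {k+2,k+3}. *)
Definition S21_edge (k a b : nat) : bool :=
  ((a == 0) && (1 <= b <= k.+1)) || ((a == k.+1) && (b == k.+2)).

Definition S21 (k : nat) : rel 'I_(k + 3) :=
  fun i j => S21_edge k (val i) (val j) || S21_edge k (val j) (val i).
Arguments S21 k : clear implicits.

From mathcomp Require Import all_boot zify.

(* Let D be the maximum degree of G and h_k = hom(S_{2,1^k}; G).  Sending the
   centre and the far leaf to a vertex of degree D and the k+1 other vertices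
   to its neighbours gives h_k >= D^(k+1).  Deleting a leaf adjacent to the
   centre maps hom(S_{2,1^(k+1)}; G) at most D-to-one into hom(S_{2,1^k}; G),
   so h_(k+1) <= D h_k.  Hence h_(k+1)^(k+1) <= D^(k+1) h_k^(k+1) <= h_k^(k+2). *)

Lemma card_leq_fibers {T U : finType} (h : T -> U) (A : {set T}) (B : {set U}) c :
  {in A, forall x, h x \in B} ->
  {in B, forall y, #|[set x in A | h x == y]| <= c} ->
  #|A| <= c * #|B|.
Proof.
move=> hAB hfib; rewrite -sum1_card (partition_big h (mem B) hAB) /=.
rewrite mulnC -sum_nat_const; apply: leq_sum => y By.
by rewrite sum1dep_card; apply: hfib.
Qed.

Definition homs {H G : finType} (eH : rel H) (eG : rel G) : {set {ffun H -> G}} :=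
  [set f : {ffun H -> G} | [forall x, forall y, eH x y ==> eG (f x) (f y)]].

Lemma card_homs {H G : finType} (eH : rel H) (eG : rel G) :
  #|homs eH eG| = hom eH eG.
Proof. by []. Qed.

Section MaxDegree.
Context {V : finType} (e : rel V).

Definition degree (v : V) : nat := #|[set w | e v w]|.
Definition max_degree : nat := \max_(v : V) degree v.

Lemma leq_degree_max v : degree v <= max_degree.
Proof. exact: leq_bigmax. Qed.

Lemma max_degree_exp_leq k n :
  (forall v, degree v ^ k.+1 <= n) -> max_degree ^ k.+1 <= n.
Proof.
move=> hdeg; apply: (big_ind (fun d => d ^ k.+1 <= n)) => // [|d d' hd hd'].
  by rewrite exp0n.
by rewrite /maxn; case: ltnP.
Qed.

End MaxDegree.

Section Spiders.
Variables (V : finType) (e : rel V).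
Hypothesis e_sym : symmetric e.

Lemma S21_homP k (f : {ffun 'I_(k + 3) -> V}) :
  reflect (forall x y : 'I_(k + 3), S21_edge k x y -> e (f x) (f y))
          (f \in homs (S21 k) e).
Proof.
rewrite inE; apply: (iffP forallP) => [hf x y hxy | hf x].
  by have /forallP/(_ y)/implyP := hf x; rewrite /S21 hxy; apply.
apply/forallP => y; apply/implyP; rewrite /S21 => /orP [/hf // | /hf].
by rewrite e_sym.
Qed.

Definition centre k : 'I_(k + 3) := Ordinal (ltn_addl k (isT : 0 < 3)).
Definition first_leaf k : 'I_(k.+1 + 3) := Ordinal (ltn_addl k.+1 (isT : 1 < 3)).

Definition star_at k (v : V) (t : {ffun 'I_k.+1 -> V}) : {ffun 'I_(k + 3) -> V} :=
  [ffun j : 'I_(k + 3) => if (val j == 0) || (val j == k.+2) then v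
                          else t (inord (val j).-1)].

Lemma star_at_inj k v : injective (star_at k v).
Proof.
move=> t1 t2 eq_t; apply/ffunP => i.
have lt_i : i.+1 < k + 3 by have := ltn_ord i; lia.
have := congr1 (fun f : {ffun _ -> V} => f (Ordinal lt_i)) eq_t.
rewrite !ffunE /= (_ : (i.+1 == k.+2) = false) ?inord_val //.
by have := ltn_ord i; lia.
Qed.

Lemma star_at_hom k v t :
  t \in ffun_on [set w | e v w] -> star_at k v t \in homs (S21 k) e.
Proof.
move=> /ffun_onP t_nbr; apply/S21_homP => -[x lt_x] [y lt_y].
rewrite /S21_edge !ffunE /= => /orP [/andP [/eqP -> y_leaf] | /andP [/eqP -> /eqP ->]].
  rewrite (_ : (y == 0) || (y == k.+2) = false); last by lia.
  by have := t_nbr (inord y.-1); rewrite inE.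
rewrite eqxx orbT (_ : (k.+1 == 0) || (k.+1 == k.+2) = false); last by lia.
by rewrite e_sym; have := t_nbr (inord k); rewrite inE.
Qed.

Lemma degree_exp_leq_hom k v : degree e v ^ k.+1 <= hom (S21 k) e.
Proof.
rewrite -card_homs -[k.+1]card_ord -card_ffun_on.
rewrite -(card_imset _ (@star_at_inj k v)); apply/subset_leq_card/subsetP.
by move=> _ /imsetP [t t_nbr ->]; apply: star_at_hom.
Qed.

Lemma max_degree_exp_leq_hom k : max_degree e ^ k.+1 <= hom (S21 k) e.
Proof. by apply: max_degree_exp_leq => v; apply: degree_exp_leq_hom. Qed.

(* [lift (first_leaf k)] skips the ordinal 1, a leaf at the centre, and so
   embeds S_{2,1^k} into S_{2,1^(k+1)}. *)
Definition drop_leaf k (f : {ffun 'I_(k.+1 + 3) -> V}) : {ffun 'I_(k + 3) -> V} :=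
  [ffun j => f (lift (first_leaf k) j)].

Lemma drop_leaf_hom k f :
  f \in homs (S21 k.+1) e -> drop_leaf k f \in homs (S21 k) e.
Proof.
move=> /S21_homP f_hom; apply/S21_homP => x y xy; rewrite !ffunE.
apply: f_hom; move: xy; rewrite /S21_edge /= /bump /=.
by case: (leqP 1 x); case: (leqP 1 y) => /=; lia.
Qed.

Lemma card_drop_leaf_fiber k g :
  #|[set f in homs (S21 k.+1) e | drop_leaf k f == g]| <= max_degree e.
Proof.
set F := [set f in _ | _].
have fiber_inj : {in F &, injective (fun f : {ffun _ -> V} => f (first_leaf k))}.
  move=> f1 f2 /setIdP [_ /eqP g_f1] /setIdP [_ /eqP g_f2] eq_f.
  apply/ffunP => x; case: (unliftP (first_leaf k) x) => [j -> | -> //].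
  by have := congr1 (fun h : {ffun _ -> V} => h j) g_f1; rewrite -g_f2 !ffunE.
rewrite -(card_in_imset fiber_inj).
apply: (leq_trans _ (leq_degree_max e (g (centre k)))).
apply/subset_leq_card/subsetP => _ /imsetP [f + ->].
move=> /setIdP [/S21_homP f_hom /eqP <-]; rewrite inE ffunE.
by apply: f_hom; rewrite /S21_edge /= /bump /=; lia.
Qed.

Lemma hom_S21S_leq k : hom (S21 k.+1) e <= max_degree e * hom (S21 k) e.
Proof.
rewrite -!card_homs; apply: (card_leq_fibers (drop_leaf k)).
  exact: drop_leaf_hom.
by move=> g _; apply: card_drop_leaf_fiber.
Qed.

Lemma hom_S21S_exp_leq k :
  hom (S21 k.+1) e ^ k.+1 <= hom (S21 k) e ^ k.+2.
Proof.
apply: (@leq_trans ((max_degree e * hom (S21 k) e) ^ k.+1)).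
  by rewrite leq_exp2r //; apply: hom_S21S_leq.
rewrite expnMn [X in _ <= X]expnS; apply: leq_mul => //.
exact: max_degree_exp_leq_hom.
Qed.

End Spiders.

Theorem theorem3p5 (m : nat) (V : finType) (e : rel V) :
  2 <= m -> simple_graph e ->
  hom (S21 (m - 2)) e ^ m >= hom (S21 (m - 1)) e ^ (m - 1).
Proof.
case: m => [|[|k]] // _ [e_sym _].
by rewrite !subSS !subn0; apply: hom_S21S_exp_leq.
Qed.
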